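(* Let $S$ be a $\Gamma$-AG$^{**}$-groupoid. Then $S$ is intra-regular if and only if every $\Gamma$-bi-ideal $B$ of $S$ is $\Gamma$-idempotent, i.e. $B\Gamma B=B$.
   Context: Let $S$ and $\Gamma$ be nonempty sets with a map $S\times\Gamma\times S\to S$, $(x,\gamma,y)\mapsto x\gamma y$. $S$ is a $\Gamma$-AG-groupoid if $(x\gamma y)\delta z=(z\gamma y)\delta x$ for all $x,y,z\in S$, $\gamma,\delta\in\Gamma$; it is a $\Gamma$-AG$^{**}$-groupoid if moreover $a\alpha(b\beta c)=b\alpha(a\beta c)$ for all $a,b,c\in S$, $\alpha,\beta\in\Gamma$. For subsets $A,B\subseteq S$, $A\Gamma B=\{a\gamma b: a\in A,\gamma\in\Gamma,b\in B\}$. $S$ is intra-regular if for every $a\in S$ there exist $x,y\in S$ and $\beta,\gamma,\delta\in\Gamma$ with $a=(x\beta(a\delta a))\gamma y$. A nonempty subset $B\subseteq S$ is a $\Gamma$-bi-ideal if $B\Gamma B\subseteq B$ and $(B\Gamma S)\Gamma B\subseteq B$. *)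

Definition is_GammaAG {S G : Type} (m : S -> G -> S -> S) : Prop :=
  forall (x y z : S) (g d : G), m (m x g y) d z = m (m z g y) d x.

Definition is_GammaAGss {S G : Type} (m : S -> G -> S -> S) : Prop :=
  is_GammaAG m /\
  forall (a b c : S) (al be : G), m a al (m b be c) = m b al (m a be c).

Definition gprod {S G : Type} (m : S -> G -> S -> S) (A B : S -> Prop) : S -> Prop :=
  fun s => exists a g b, A a /\ B b /\ s = m a g b.

Definition subset {S : Type} (A B : S -> Prop) : Prop := forall s, A s -> B s.

Definition intra_regular {S G : Type} (m : S -> G -> S -> S) : Prop :=
  forall a : S, exists (x y : S) (be ga de : G), a = m (m x be (m a de a)) ga y.

Definition is_bi_ideal {S G : Type} (m : S -> G -> S -> S) (B : S -> Prop) : Prop :=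
  (exists b, B b) /\
  subset (gprod m B B) B /\
  subset (gprod m (gprod m B (fun _ => True)) B) B.

Definition gamma_idempotent {S G : Type} (m : S -> G -> S -> S) (B : S -> Prop) : Prop :=
  forall s, gprod m B B s <-> B s.


(* If [a] is intra-regular, [a = (x(aa))y] can be rearranged by the two laws into
   [a = a((a(Zy))a)] with [Z = (yx)x], exhibiting [a] in [BΓ((BΓS)ΓB)] for any
   bi-ideal [B] containing it.
   Conversely, the bi-ideal generated by [a] squares into the ideal generated by [aΓa];
   idempotency therefore puts [a] in that ideal, i.e. [a = wγy] with [w] obtained from
   [aδa] by left multiplications, and each left factor can be traded for one into the
   second argument until [a = (aδa)γy'], which is intra-regularity. *)

Section AGss.

Variables (S G : Type) (m : S -> G -> S -> S).

Hypothesis left_invertive :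
  forall (x y z : S) (g d : G), m (m x g y) d z = m (m z g y) d x.
Hypothesis left_permutable :
  forall (a b c : S) (al be : G), m a al (m b be c) = m b al (m a be c).

Lemma medial x y z w al be ga :
  m (m x al y) be (m z ga w) = m (m x al z) be (m y ga w).
Proof.
  rewrite (left_invertive x y), (left_invertive z w y).
  apply left_invertive.
Qed.

Definition intra_regular_at (a : S) : Prop :=
  exists (x y : S) (be ga de : G), a = m (m x be (m a de a)) ga y.

Lemma intra_regular_factor b x y be ga de :
  b = m (m x be (m b de b)) ga y ->
  b = m b ga (m (m b de (m (m (m y be x) be x) ga y)) de b).
Proof.
  intro Hb.
  set (Z := m (m y be x) be x).
  rewrite (left_permutable b Z y de ga).
  rewrite <- (left_permutable (m Z de (m b ga y)) b b ga de).
  rewrite <- (left_invertive (m b de b) (m b ga y) Z de ga).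
  rewrite <- (left_permutable (m y be x) _ x ga be).
  rewrite <- (left_invertive x (m b ga y) (m b de b) de be).
  rewrite <- (left_invertive _ x y be ga).
  rewrite <- (left_invertive x (m b de b) _ be be).
  rewrite <- (left_permutable x _ (m b ga y) be de).
  rewrite <- (left_permutable b _ y de ga).
  rewrite <- Hb.
  exact Hb.
Qed.

Lemma bi_ideal_idempotent_of_intra_regular (B : S -> Prop) :
  (forall a, intra_regular_at a) -> is_bi_ideal m B -> gamma_idempotent m B.
Proof.
  intros intra (_ & BB_sub & BSB_sub) b.
  split; [apply BB_sub | intro Bb].
  destruct (intra b) as (x & y & be & ga & de & Hb).
  pose proof (intra_regular_factor b x y be ga de Hb) as Hfactor.
  set (Z := m (m y be x) be x) in Hfactor.
  exists b, ga, (m (m b de (m Z ga y)) de b).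
  split; [exact Bb | split; [| exact Hfactor]].
  apply BSB_sub.
  exists (m b de (m Z ga y)), de, b.
  split; [now exists b, de, (m Z ga y) | now split].
Qed.

Inductive sq_lideal (a : S) : S -> Prop :=
  | sq_lideal_sq d : sq_lideal a (m a d a)
  | sq_lideal_mull x g w : sq_lideal a w -> sq_lideal a (m x g w).

Definition sq_ideal (a z : S) : Prop :=
  sq_lideal a z \/ exists w g y, sq_lideal a w /\ z = m w g y.

(* The bi-ideal generated by [a]: [{a} ∪ (SΓS)Γa ∪ J], with [J] the ideal generated by [aΓa]. *)
Definition bi_ideal_gen (a z : S) : Prop :=
  z = a \/ (exists x g u d, z = m (m x g u) d a) \/ sq_ideal a z.

Lemma sq_ideal_mull a z x g : sq_ideal a z -> sq_ideal a (m x g z).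
Proof.
  intros [Hz | (w & g' & y & Hw & ->)].
  - left. now apply sq_lideal_mull.
  - right. exists w, g, (m x g' y). split; [exact Hw | apply left_permutable].
Qed.

Lemma sq_ideal_mulr a z x g : sq_ideal a z -> sq_ideal a (m z g x).
Proof.
  intros [Hz | (w & g' & y & Hw & ->)].
  - right. now exists z, g, x.
  - left. rewrite left_invertive. now apply sq_lideal_mull.
Qed.

Lemma sq_lideal_form a w : sq_lideal a w -> exists e V, w = m a e V.
Proof.
  induction 1 as [d | x g w _ (e & V & ->)].
  - now exists d, a.
  - exists g, (m x e V). apply left_permutable.
Qed.

Lemma bi_ideal_gen_mul a p q g :
  bi_ideal_gen a p -> bi_ideal_gen a q -> sq_ideal a (m p g q).
Proof.
  intros Hp Hq.
  destruct Hp as [-> | [(x & g1 & u & d1 & ->) | Fp]];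
    [| | now apply sq_ideal_mulr];
    (destruct Hq as [-> | [(y & g2 & t & d2 & ->) | Fq]];
      [| | now apply sq_ideal_mull]).
  - left. apply sq_lideal_sq.
  - left. rewrite left_permutable. apply sq_lideal_mull, sq_lideal_sq.
  - right. exists (m a d1 a), g, (m x g1 u). split; [apply sq_lideal_sq | apply left_invertive].
  - left. rewrite medial. apply sq_lideal_mull, sq_lideal_sq.
Qed.

Lemma bi_ideal_gen_is_bi_ideal a : is_bi_ideal m (bi_ideal_gen a).
Proof.
  split; [now exists a; left | split].
  - intros s (p & g & q & Hp & Hq & ->). right. right. now apply bi_ideal_gen_mul.
  - intros s (p' & d & q & (p & g & t & _ & _ & ->) & Hq & ->).
    destruct Hq as [-> | [(y & g2 & t2 & d2 & ->) | Fq]].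
    + right. left. now exists p, g, t, d.
    + right. left. exists (m (m p g t) d2 y), g2, t2, d.
      rewrite (left_invertive y t2 a), left_permutable.
      apply left_invertive.
    + right. right. now apply sq_ideal_mull.
Qed.

Lemma sq_lideal_shift a s ga e V g y :
  a = m (m s ga (m a e V)) g y ->
  a = m (m a e V) g (m (m s ga (m y ga (m s e V))) g y).
Proof.
  intro Ha.
  rewrite <- (left_permutable (m s ga (m y ga (m s e V))) (m a e V) y g g).
  rewrite <- (left_invertive (m (m a e V) g y) (m y ga (m s e V)) s ga g).
  rewrite <- (left_invertive (m y ga (m s e V)) y (m a e V) g ga).
  rewrite <- (left_invertive s (m a e V) _ ga g).
  rewrite <- (left_permutable (m y ga (m s e V)) (m s ga (m a e V)) y g g).
  rewrite <- Ha.
  rewrite <- (left_invertive a (m s e V) y ga g).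
  rewrite <- (left_permutable s a V ga e).
  exact Ha.
Qed.

Lemma intra_regular_at_of_sq_lideal a w g y :
  sq_lideal a w -> a = m w g y -> intra_regular_at a.
Proof.
  intro Hw. revert g y.
  induction Hw as [d | s ga K HK IH]; intros g y Ha.
  - exists (m a g y), y, d, g, d.
    rewrite <- (left_invertive (m a d a) y a g d), <- Ha.
    exact Ha.
  - destruct (sq_lideal_form a K HK) as (e & V & ->).
    exact (IH g _ (sq_lideal_shift a s ga e V g y Ha)).
Qed.

Lemma intra_regular_of_bi_ideals_idempotent :
  (forall B, is_bi_ideal m B -> gamma_idempotent m B) -> forall a, intra_regular_at a.
Proof.
  intros idem a.
  destruct (proj2 (idem _ (bi_ideal_gen_is_bi_ideal a) a) (or_introl eq_refl))
    as (p & g & q & Hp & Hq & Ha).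
  pose proof (bi_ideal_gen_mul a p q g Hp Hq) as [Ja | (w & g' & y & Hw & Hy)];
    rewrite <- Ha in *.
  - destruct (sq_lideal_form a a Ja) as (e & V & HaV).
    exact (intra_regular_at_of_sq_lideal a a e V Ja HaV).
  - exact (intra_regular_at_of_sq_lideal a w g' y Hw Hy).
Qed.

End AGss.

Theorem mainTheorem10 (S G : Type) (m : S -> G -> S -> S)
  (hS : inhabited S) (hG : inhabited G) (hAG : is_GammaAGss m) :
  intra_regular m <-> (forall B : S -> Prop, is_bi_ideal m B -> gamma_idempotent m B).
Proof.
  destruct hAG as [left_invertive left_permutable].
  split.
  - intros intra B.
    now apply bi_ideal_idempotent_of_intra_regular.
  - exact (intra_regular_of_bi_ideals_idempotent S G m left_invertive left_permutable).
Qed.
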